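(* Let $(K,C,S)$ be the associated layered complex of a divided simplicial complex. If $(K,C,S)$ admits no $S$-collapse and $(K',C,S)$ is obtained from $(K,C,S)$ by an intermediate collapse, then $(K',C,S)$ still does not admit an $S$-collapse.
   Context: A simplicial complex $K$ is a set of finite nonempty sets (simplices) closed under passing to nonempty subsets (faces); $K^0$ is its vertex set; $t<s$ means $t$ is a proper face of $s$. A simplex is principal in $K$ if it is not a proper face of any simplex of $K$; $s$ is free in $K$ if it is a proper face of a principal simplex $p$ and of no other simplex of $K$. A layered simplicial complex is $(K,C,S)$ with $C,S$ disjoint subcomplexes; $\mathrm{IM}(K,C,S)$ denotes simplices in neither $C$ nor $S$. A divided simplicial complex is $(K,S^0)$, $S^0\subseteq K^0$; its associated layered complex has $S$ = simplices with all vertices in $S^0$, $C$ = simplices with all vertices in $K^0-S^0$. $(K,C,S)$ admits an $S$-collapse if there exist $p\in S$ principal in $K$ and a face $s$ of $p$ free in $K$ (the elementary $S$-collapse then yields $(K-\{s,p\},C,S-\{s,p\})$). For $(K,C,S)$ associated to a divided complex $(K,S^0)$, an elementary intermediate collapse replaces it by $(K-\{s,p\},C,S)$ where (i) $p\in\mathrm{IM}(K,C,S)$, (ii) $p$ is principal in $K$, (iii) $s$ is a face of $p$ free in $K$, (iv) every $t\in S$ with $t<p$ satisfies $t<s$; the result is again the layered complex associated to the divided complex $(K-\{s,p\},S^0)$. An intermediate collapse is a finite sequence of elementary intermediate collapses. *)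

From mathcomp Require Import all_boot.
Set Implicit Arguments. Unset Strict Implicit. Unset Printing Implicit Defensive.

Section Simplicial.
Variable V : finType.

Definition is_complex (K : {set {set V}}) : Prop :=
  forall s, s \in K -> s != set0 /\
    (forall t : {set V}, t \subset s -> t != set0 -> t \in K).

Definition vertices (K : {set {set V}}) : {set V} := [set v | [set v] \in K].

Definition principal (K : {set {set V}}) (p : {set V}) : Prop :=
  p \in K /\ forall q, q \in K -> ~ (p \proper q).

Definition free (K : {set {set V}}) (s : {set V}) : Prop :=
  s \in K /\ exists p, [/\ principal K p, s \proper p &
    forall q, q \in K -> s \proper q -> q = p].

(* associated layered complex of the divided complex (K, S0) *)
Definition S_of (K : {set {set V}}) (S0 : {set V}) : {set {set V}} :=
  [set s in K | s \subset S0].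
Definition C_of (K : {set {set V}}) (S0 : {set V}) : {set {set V}} :=
  [set s in K | s \subset vertices K :\: S0].

Definition divided (K : {set {set V}}) (S0 : {set V}) : Prop :=
  is_complex K /\ S0 \subset vertices K.

Definition admits_S_collapse (K S : {set {set V}}) : Prop :=
  exists p s : {set V}, [/\ p \in S, principal K p, s \subset p & free K s].

Definition elem_int_collapse (S0 : {set V}) (K K' : {set {set V}}) : Prop :=
  exists p s : {set V},
    [/\ p \in K, p \notin C_of K S0, p \notin S_of K S0 & principal K p] /\
    [/\ s \subset p, free K s,
     (forall t, t \in S_of K S0 -> t \proper p -> t \proper s) &
     K' = K :\: [set s; p]].

Inductive int_collapse (S0 : {set V}) : {set {set V}} -> {set {set V}} -> Prop :=
  | ic_refl K : int_collapse S0 K K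
  | ic_step K K1 K' : elem_int_collapse S0 K K1 -> int_collapse S0 K1 K' ->
      int_collapse S0 K K'.

End Simplicial.

(* The pair removed by an elementary intermediate collapse is invisible to any
   S-collapse of the smaller complex.  Let p' be principal in K' = K - {s, p}
   with p' in S.  A face a < s always has a second coface a u (p - s) in K'
   between a and p, so p' cannot lie below s; since the simplices of S below p
   lie below s, p' cannot lie below p either, and p' stays principal in K.
   The same detour shows that a free face s' of p' in K' cannot lie below s or
   p, so its only coface in K is still p'.  Hence an S-collapse of K' is one of
   K, and since s, p are not in S, the layer S is the same for K and K'. *)
From mathcomp Require Import all_boot.

Set Implicit Arguments.
Unset Strict Implicit.
Unset Printing Implicit Defensive.

Section FreeFaces.
Variable V : finType.
Implicit Types (K : {set {set V}}) (a b c m p q s t : {set V}).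

Definition free_face K s p :=
  [/\ principal K p, s \proper p & forall q, q \in K -> s \proper q -> q = p].

Lemma free_face_of_subset K s p :
  principal K p -> s \subset p -> free K s -> free_face K s p.
Proof.
move=> [pK p_max] sp [_ [p0 [[p0K _] sp0 p0_uniq]]].
have sp_proper : s \proper p.
  by rewrite properEneq sp andbT; apply: contraPneq (p_max p0 p0K) => <-.
by split=> // q qK sq; rewrite (p0_uniq q qK sq) (p0_uniq p pK sp_proper).
Qed.

Lemma other_face_between K a m b : is_complex K ->
  a \proper m -> m \proper b -> b \in K ->
  exists2 c, c \in K & [/\ a \proper c, c \subset b, c != m & c != b].
Proof.
move=> cK am mb bK.
have [_ [x xb xNm]] := properP mb.
have [_ [v vm vNa]] := properP am.
have ab : a \subset b := subset_trans (proper_sub am) (proper_sub mb).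
have xNa : x \notin a by apply: contra xNm; apply: (subsetP (proper_sub am)).
have x_c : x \in a :|: (b :\: m) by rewrite !inE xb xNm orbT.
have cb : a :|: (b :\: m) \subset b by rewrite subUset ab subsetDl.
exists (a :|: (b :\: m)); first by apply: (proj2 (cK b bK)) => //; apply/set0Pn; exists x.
split=> //.
- by apply/properP; split; [exact: subsetUl | exists x].
- by apply/eqP => cm; move: x_c; rewrite cm (negbTE xNm).
- apply/eqP => cb_eq; have : v \in a :|: (b :\: m) by rewrite cb_eq (subsetP (proper_sub mb)).
  by rewrite !inE vm (negbTE vNa).
Qed.

Lemma is_complex_S_of K (S0 : {set V}) : is_complex K -> is_complex (S_of K S0).
Proof.
move=> cK u; rewrite inE => /andP [uK uS0]; have [u0 u_faces] := cK u uK.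
split=> // t tu t0; rewrite inE u_faces //=; exact: subset_trans tu uS0.
Qed.

Section Removal.
Variables (K S : {set {set V}}) (s p : {set V}).
Hypotheses (cK : is_complex K) (cS : is_complex S) (fsp : free_face K s p).
Hypothesis S_below_p : forall t, t \in S -> t \proper p -> t \proper s.

Let K' := K :\: [set s; p].

Lemma mem_removal q : (q \in K') = [&& q != s, q != p & q \in K].
Proof. by rewrite !inE negb_or andbA. Qed.

Lemma removed_face_notin_S : s \notin S.
Proof.
have [_ sp _] := fsp.
by apply/negP => sS; move: (S_below_p sS sp); rewrite properxx.
Qed.

Lemma is_complex_removal : is_complex K'.
Proof.
have [[pK p_max] _ s_cofaces] := fsp.
move=> a; rewrite mem_removal => /and3P [aNs aNp aK]; have [a0 a_faces] := cK aK.
split=> // t ta t0; rewrite mem_removal a_faces // andbT.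
apply/andP; split; apply/eqP => tE; rewrite {t}tE in ta t0.
- have ap : a = p by apply: s_cofaces; rewrite // properEneq eq_sym aNs.
  by rewrite ap eqxx in aNp.
- by apply: (p_max a aK); rewrite properEneq eq_sym aNp ta.
Qed.

Lemma face_below_s_detour a : a \proper s -> exists2 c, c \in K' & a \proper c /\ c \proper p.
Proof.
have [[pK _] sp _] := fsp.
move=> a_s; have [c cinK [ac cp cNs cNp]] := other_face_between cK a_s sp pK.
by exists c; [rewrite mem_removal cNs cNp | split; rewrite // properEneq cNp].
Qed.

Lemma principal_removal_not_below_s p' : principal K' p' -> ~ p' \proper s.
Proof.
move=> [_ p'_max] /face_below_s_detour [c cK' [p'c _]]; exact: p'_max cK' p'c.
Qed.

Lemma principal_of_removal p' : p' \in S -> principal K' p' -> principal K p'.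
Proof.
move=> p'S p'_pr; have [p'K' p'_max] := p'_pr.
have Nbelow_s := principal_removal_not_below_s p'_pr.
split; first by move: p'K'; rewrite mem_removal => /and3P [].
move=> q qK p'q; case: (eqVneq q s) => [qs | qNs]; first by apply: Nbelow_s; rewrite -qs.
case: (eqVneq q p) => [qp | qNp]; first by apply: Nbelow_s; apply: S_below_p; rewrite -?qp.
by apply: (p'_max q) => //; rewrite mem_removal qNs qNp.
Qed.

Lemma free_of_removal p' s' :
  p' \in S -> principal K' p' -> s' \subset p' -> free K' s' -> free K s'.
Proof.
move=> p'S p'_pr s'p' s'_free.
have [_ s'p'_proper s'_cofaces] := free_face_of_subset p'_pr s'p' s'_free.
have s'K : s' \in K by move: s'_free => [+ _]; rewrite mem_removal => /and3P [].
have s'Nbelow_s : ~ s' \proper s.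
  move=> /face_below_s_detour [c cK' [s'c cp]].
  apply: (principal_removal_not_below_s p'_pr); apply: S_below_p => //.
  by rewrite -(s'_cofaces c cK' s'c).
have s'S : s' \in S.
  have [p'0 p'_faces] := cS p'S.
  by apply: p'_faces s'p' _; have [] := cK s'K.
have s'Nbelow_p : ~ s' \proper p by move=> /(S_below_p s'S).
split=> //; exists p'; split=> //; first exact: principal_of_removal.
move=> q qK s'q; apply: (s'_cofaces q) => //; rewrite mem_removal qK andbT.
by apply/andP; split; apply/eqP => qE; rewrite qE in s'q; [exact: s'Nbelow_s | exact: s'Nbelow_p].
Qed.

Lemma no_S_collapse_removal : ~ admits_S_collapse K S -> ~ admits_S_collapse K' S.
Proof.
move=> noS [p' [s' [p'S p'_pr s'p' s'_free]]]; apply: noS.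
exists p', s'; split=> //; [exact: principal_of_removal | exact: free_of_removal p'_pr _ _].
Qed.

End Removal.

Lemma elem_int_collapseP (S0 : {set V}) K K1 : elem_int_collapse S0 K K1 ->
  exists s p, [/\ free_face K s p, p \notin S_of K S0,
    forall t, t \in S_of K S0 -> t \proper p -> t \proper s & K1 = K :\: [set s; p]].
Proof.
move=> [p [s [[_ _ pNS p_pr] [sp s_free S_below_p ->]]]].
by exists s, p; split=> //; apply: free_face_of_subset.
Qed.

Lemma S_of_removal K (S0 : {set V}) s p : s \notin S_of K S0 -> p \notin S_of K S0 ->
  S_of (K :\: [set s; p]) S0 = S_of K S0.
Proof.
move=> sNS pNS; apply/setP => t.
have -> : (t \in S_of (K :\: [set s; p]) S0) = (t \notin [set s; p]) && (t \in S_of K S0).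
  by rewrite !inE andbA.
case: (boolP (t \in [set s; p])) => //.
by rewrite in_set2 => /orP [] /eqP ->; apply/esym/negbTE.
Qed.

End FreeFaces.

Theorem proposition4p15 (V : finType) (K K' : {set {set V}}) (S0 : {set V}) :
  divided K S0 ->
  ~ admits_S_collapse K (S_of K S0) ->
  int_collapse S0 K K' ->
  ~ admits_S_collapse K' (S_of K S0).
Proof.
move=> [cK _] noS ic; elim: ic cK noS => {K K'} [// | K K1 K' step _ IH] cK noS.
have [s [p [fsp pNS S_below_p K1E]]] := elem_int_collapseP step; subst K1.
have cS : is_complex (S_of K S0) := is_complex_S_of cK.
have S_ofE := S_of_removal (removed_face_notin_S fsp S_below_p) pNS.
rewrite -S_ofE; apply: IH; first exact: is_complex_removal.
by rewrite S_ofE; apply: no_S_collapse_removal.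
Qed.
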